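(* Let $\mathcal H$ be a Hilbert space and $\mathcal S,\mathcal W,\mathcal A\subseteq\mathcal H$ closed subspaces such that $\mathcal S,\mathcal W,\mathcal A,\mathcal S^\perp,\mathcal W^\perp,\mathcal A^\perp$ are nonzero and $\mathcal A\oplus\mathcal S^\perp=\mathcal H$. Fix $\lambda\in[0,1]$ and let $R_\lambda:=P_{\mathcal W}-\lambda P_{\mathcal W}P_{\mathcal A\mathcal S^\perp}-(1-\lambda)P_{\mathcal W}P_{\mathcal S}$. Then for every $x\in\mathcal A$, $$\|R_\lambda x\|=(1-\lambda)\|P_{\mathcal W}P_{\mathcal S^\perp}x\|$$ and $$(1-\lambda)\cos(\mathcal A,\mathcal S^\perp)\cos(\mathcal W^\perp,\mathcal S)\|x\|\le\|R_\lambda x\|\le(1-\lambda)\sin(\mathcal A,\mathcal S)\sin(\mathcal W,\mathcal S)\|x\|.$$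
   Context: $P_{\mathcal V}$ is the orthogonal projection onto a closed subspace $\mathcal V$, $\mathcal V^\perp$ its orthogonal complement. For closed subspaces with $\mathcal V_1\oplus\mathcal V_2=\mathcal H$, $P_{\mathcal V_1\mathcal V_2}$ is the oblique projection onto $\mathcal V_1$ along $\mathcal V_2$ (identity on $\mathcal V_1$, zero on $\mathcal V_2$). Angles between nonzero closed subspaces: $\cos(\mathcal V_1,\mathcal V_2):=\inf_{0\ne x\in\mathcal V_1}\|P_{\mathcal V_2}x\|/\|x\|$, $\sin(\mathcal V_1,\mathcal V_2):=\sup_{0\ne x\in\mathcal V_1}\|P_{\mathcal V_2^\perp}x\|/\|x\|$. *)

From Stdlib Require Import Reals Lra ClassicalEpsilon.
Open Scope R_scope.

Record Hilbert := {
  hcar :> Type;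
  hzero : hcar;
  hadd : hcar -> hcar -> hcar;
  hopp : hcar -> hcar;
  hscal : R -> hcar -> hcar;
  hinner : hcar -> hcar -> R;
  hadd_assoc : forall x y z, hadd x (hadd y z) = hadd (hadd x y) z;
  hadd_comm : forall x y, hadd x y = hadd y x;
  hadd_0 : forall x, hadd x hzero = x;
  hadd_opp : forall x, hadd x (hopp x) = hzero;
  hscal_1 : forall x, hscal 1 x = x;
  hscal_assoc : forall a b x, hscal a (hscal b x) = hscal (a * b) x;
  hscal_distr_v : forall a x y, hscal a (hadd x y) = hadd (hscal a x) (hscal a y);
  hscal_distr_s : forall a b x, hscal (a + b) x = hadd (hscal a x) (hscal b x);
  hinner_sym : forall x y, hinner x y = hinner y x;
  hinner_add : forall x y z, hinner (hadd x y) z = hinner x z + hinner y z;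
  hinner_scal : forall a x y, hinner (hscal a x) y = a * hinner x y;
  hinner_pos : forall x, 0 <= hinner x x;
  hinner_def : forall x, hinner x x = 0 -> x = hzero;
  hcomplete : forall u : nat -> hcar,
    (forall eps, 0 < eps -> exists N, forall m n, (N <= m)%nat -> (N <= n)%nat ->
        sqrt (hinner (hadd (u m) (hopp (u n))) (hadd (u m) (hopp (u n)))) < eps) ->
    exists l, forall eps, 0 < eps -> exists N, forall n, (N <= n)%nat ->
        sqrt (hinner (hadd (u n) (hopp l)) (hadd (u n) (hopp l))) < eps
}.

Arguments hzero {h}.
Arguments hadd {h}.
Arguments hopp {h}.
Arguments hscal {h}.
Arguments hinner {h}.

Section Defs.
Variable H : Hilbert.

Definition hsub (x y : H) : H := hadd x (hopp y).

Definition hnorm (x : H) : R := sqrt (hinner x x).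

Definition hconverges (u : nat -> H) (l : H) : Prop :=
  forall eps, 0 < eps -> exists N, forall n, (N <= n)%nat -> hnorm (hsub (u n) l) < eps.

Definition closed_subspace (V : H -> Prop) : Prop :=
  V hzero /\
  (forall x y, V x -> V y -> V (hadd x y)) /\
  (forall a x, V x -> V (hscal a x)) /\
  (forall u l, (forall n, V (u n)) -> hconverges u l -> V l).

Definition nonzero_sub (V : H -> Prop) : Prop := exists x, V x /\ x <> hzero.

Definition ortho (V : H -> Prop) : H -> Prop :=
  fun x => forall v, V v -> hinner x v = 0.

(** Orthogonal projection P_V (well-defined for closed subspaces; defined by
    choice of the unique p in V with x - p orthogonal to V). *)
Definition proj (V : H -> Prop) (x : H) : H :=
  epsilon (inhabits hzero) (fun p => V p /\ ortho V (hsub x p)).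

Definition direct_sum_full (V1 V2 : H -> Prop) : Prop :=
  (forall x, exists v1 v2, V1 v1 /\ V2 v2 /\ x = hadd v1 v2) /\
  (forall x, V1 x -> V2 x -> x = hzero).

Definition oblique_proj (V1 V2 : H -> Prop) (x : H) : H :=
  epsilon (inhabits hzero) (fun p => V1 p /\ V2 (hsub x p)).

Definition is_glb (E : R -> Prop) (m : R) : Prop :=
  (forall y, E y -> m <= y) /\ (forall b, (forall y, E y -> b <= y) -> b <= m).

Definition cos_ang (V1 V2 : H -> Prop) : R :=
  epsilon (inhabits 0) (is_glb (fun r => exists x, V1 x /\ x <> hzero /\
                                     r = hnorm (proj V2 x) / hnorm x)).

Definition sin_ang (V1 V2 : H -> Prop) : R :=
  epsilon (inhabits 0) (is_lub (fun r => exists x, V1 x /\ x <> hzero /\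
                                     r = hnorm (proj (ortho V2) x) / hnorm x)).

Definition R_lam (S W A : H -> Prop) (lam : R) (x : H) : H :=
  hsub (hsub (proj W x) (hscal lam (proj W (oblique_proj A (ortho S) x))))
       (hscal (1 - lam) (proj W (proj S x))).

End Defs.

Arguments hsub {H}.
Arguments hnorm {H}.
Arguments closed_subspace {H}.
Arguments nonzero_sub {H}.
Arguments ortho {H}.
Arguments proj {H}.
Arguments direct_sum_full {H}.
Arguments oblique_proj {H}.
Arguments cos_ang {H}.
Arguments sin_ang {H}.
Arguments R_lam {H}.

From Stdlib Require Import Reals Lra Classical ClassicalEpsilon.
Open Scope R_scope.

(* For [x] in [A] the oblique projection fixes [x], so [R_lam x = (1 - lam) P_W y]
   with [y = P_{S^perp} x]; the bounds then split along [x -> y -> P_W y].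
   The ratio [|y| / |x|] lies between [cos(A, S^perp)] and [sin(A, S)] by the
   very definition of the angles.  Since [y] is orthogonal to [S], any [u] with
   [<u, y> = |u|^2] satisfies [|u|^2 = <P_{S^perp} u, y> <= |P_{S^perp} u| |y|].
   For [u = P_W y] this gives [|P_W y| <= sin(W, S) |y|]; for [u = y - P_W y],
   which lies in [W^perp], it gives [|u|^2 <= (1 - cos(W^perp, S)^2) |y|^2],
   i.e. [|P_W y| >= cos(W^perp, S) |y|].
   Orthogonal projections onto closed subspaces exist as limits of minimizing
   sequences, which are Cauchy by the parallelogram law. *)

Lemma discriminant_le (alpha e c : R) :
  0 <= c -> (forall t, 0 <= alpha - 2 * t * e + t * t * c) -> e * e <= alpha * c.
Proof.
  intros Hc Q. destruct (Req_dec c 0) as [->|Hc0].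
  - destruct (Req_dec e 0) as [->|He]; [lra|].
    specialize (Q ((alpha + 1) / (2 * e))).
    replace (2 * ((alpha + 1) / (2 * e)) * e) with (alpha + 1) in Q by (field; lra).
    lra.
  - specialize (Q (e / c)).
    replace (alpha - 2 * (e / c) * e + e / c * (e / c) * c) with (alpha - e * e / c) in Q
      by (field; lra).
    replace (e * e) with (e * e / c * c) by (field; lra).
    apply Rmult_le_compat_r; lra.
Qed.

Lemma glb_exists (E : R -> Prop) :
  (exists y, E y) -> (exists m, forall y, E y -> m <= y) -> exists m, is_glb E m.
Proof.
  intros [y0 Ey0] [m0 Hm0].
  destruct (completeness (fun r => E (- r))) as [s [Hub Hlub]].
  - exists (- m0). intros r Er. specialize (Hm0 _ Er). lra.
  - exists (- y0). rewrite Ropp_involutive. exact Ey0.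
  - exists (- s). split.
    + intros y Ey. enough (- y <= s) by lra. apply Hub. rewrite Ropp_involutive. exact Ey.
    + intros b Hb. enough (s <= - b) by lra. apply Hlub. intros r Er. specialize (Hb _ Er). lra.
Qed.

Lemma glb_approx (E : R -> Prop) m eps :
  is_glb E m -> 0 < eps -> exists y, E y /\ y < m + eps.
Proof.
  intros [_ Hglb] Heps. apply NNPP. intros Hno.
  enough (m + eps <= m) by lra.
  apply Hglb. intros y Ey. apply Rnot_lt_le. intros Hy. apply Hno. eauto.
Qed.

Lemma inv_INR_succ_small eps :
  0 < eps -> exists N, forall n, (N <= n)%nat -> / (INR n + 1) < eps.
Proof.
  intros Heps. destruct (archimed_cor1 eps Heps) as [N [HN HN0]].
  exists N. intros n Hn.
  apply (lt_INR 0) in HN0. apply le_INR in Hn. simpl in HN0.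
  eapply Rle_lt_trans; [|exact HN]. apply Rinv_le_contravar; lra.
Qed.

Section InnerProductAlgebra.
Context {H : Hilbert}.
Implicit Types (x y z : H).

Lemma hinner_0_l y : hinner hzero y = 0.
Proof. pose proof (hinner_add H hzero hzero y) as E. rewrite hadd_0 in E. lra. Qed.

Lemma hinner_opp_l x y : hinner (hopp x) y = - hinner x y.
Proof.
  pose proof (hinner_add H x (hopp x) y) as E. rewrite hadd_opp, hinner_0_l in E. lra.
Qed.

Lemma hinner_add_r x y z : hinner z (hadd x y) = hinner z x + hinner z y.
Proof. rewrite !(hinner_sym H z). apply hinner_add. Qed.

Lemma hinner_scal_r c x y : hinner y (hscal c x) = c * hinner y x.
Proof. rewrite !(hinner_sym H y). apply hinner_scal. Qed.

Lemma hinner_opp_r x y : hinner y (hopp x) = - hinner y x.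
Proof. rewrite !(hinner_sym H y). apply hinner_opp_l. Qed.

Lemma hinner_0_r y : hinner y hzero = 0.
Proof. rewrite hinner_sym. apply hinner_0_l. Qed.

Lemma hsub_eq0 x y : hsub x y = hzero -> x = y.
Proof.
  unfold hsub; intros E.
  rewrite <- (hadd_0 H x), <- (hadd_opp H y), (hadd_comm H y), hadd_assoc, E,
    hadd_comm, hadd_0.
  reflexivity.
Qed.

End InnerProductAlgebra.

Hint Rewrite hinner_add hinner_scal @hinner_opp_l @hinner_0_l
  @hinner_add_r @hinner_scal_r @hinner_opp_r @hinner_0_r : hinner.

Ltac hinner_expand := unfold hsub; autorewrite with hinner.
Ltac hinner_expand_in E := unfold hsub in E; autorewrite with hinner in E.

Lemma hinner_ext {H : Hilbert} (x y : H) : (forall z, hinner x z = hinner y z) -> x = y.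
Proof.
  intros E; apply hsub_eq0, hinner_def.
  hinner_expand; rewrite !E; ring.
Qed.

(* Vector identities are checked on inner products with an arbitrary [z],
   which only needs linearity in the left argument. *)
Ltac hvec_eq := apply hinner_ext; intro; hinner_expand; field.

Section HilbertGeometry.
Context {H : Hilbert}.
Implicit Types (a b x y z u v w : H).

Lemma hinner_add_scal_sq a b s :
  hinner (hadd a (hscal s b)) (hadd a (hscal s b))
  = hinner a a + 2 * s * hinner a b + s * s * hinner b b.
Proof. autorewrite with hinner. rewrite (hinner_sym H b a). ring. Qed.

Lemma parallelogram a b :
  hinner (hsub a b) (hsub a b) + hinner (hadd a b) (hadd a b)
  = 2 * hinner a a + 2 * hinner b b.
Proof. hinner_expand. rewrite (hinner_sym H b a). ring. Qed.

Lemma cauchy_schwarz x y : hinner x y * hinner x y <= hinner x x * hinner y y.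
Proof.
  apply discriminant_le; [apply hinner_pos|]. intros t.
  replace (hinner x x - 2 * t * hinner x y + t * t * hinner y y)
    with (hinner (hadd x (hscal (- t) y)) (hadd x (hscal (- t) y)))
    by (rewrite hinner_add_scal_sq; ring).
  apply hinner_pos.
Qed.

Lemma hnorm_ge0 x : 0 <= hnorm x.
Proof. apply sqrt_pos. Qed.

Lemma hnorm_sq x : hnorm x * hnorm x = hinner x x.
Proof. apply sqrt_sqrt, hinner_pos. Qed.

Lemma hnorm_0 : hnorm (@hzero H) = 0.
Proof. unfold hnorm. rewrite hinner_0_l. apply sqrt_0. Qed.

Lemma hnorm_gt0 x : x <> hzero -> 0 < hnorm x.
Proof.
  intros Hx. apply sqrt_lt_R0. destruct (hinner_pos H x) as [|E]; [assumption|].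
  symmetry in E. apply hinner_def in E. contradiction.
Qed.

Lemma hnorm_scal c x : hnorm (hscal c x) = Rabs c * hnorm x.
Proof.
  unfold hnorm. rewrite hinner_scal, hinner_scal_r, <- Rmult_assoc, <- sqrt_Rsqr_abs.
  apply sqrt_mult; [apply Rle_0_sqr | apply hinner_pos].
Qed.

Lemma cauchy_schwarz_hnorm x y : hinner x y <= hnorm x * hnorm y.
Proof.
  pose proof (cauchy_schwarz x y) as CS. rewrite <- !hnorm_sq in CS.
  assert (0 <= hnorm x * hnorm y) by (apply Rmult_le_pos; apply hnorm_ge0).
  nra.
Qed.

Lemma hnorm_lt_of_sq z eps : 0 < eps -> hinner z z < eps * eps -> hnorm z < eps.
Proof.
  intros Heps Hz. rewrite <- (sqrt_square eps) by lra.
  apply sqrt_lt_1_alt. split; [apply hinner_pos | exact Hz].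
Qed.

Lemma hconverges_sq (u : nat -> H) l eps :
  hconverges H u l -> 0 < eps ->
  exists N, forall n, (N <= n)%nat -> hinner (hsub (u n) l) (hsub (u n) l) < eps.
Proof.
  intros Hu Heps. destruct (Hu (sqrt eps) (sqrt_lt_R0 _ Heps)) as [N HN].
  exists N. intros n Hn. apply sqrt_lt_0_alt, HN, Hn.
Qed.

Lemma subspace_sub (V : H -> Prop) p q :
  closed_subspace V -> V p -> V q -> V (hsub p q).
Proof.
  intros (_ & Vadd & Vscal & _) Vp Vq.
  replace (hsub p q) with (hadd p (hscal (-1) q)) by hvec_eq. auto.
Qed.

Lemma ortho_sub (V : H -> Prop) p q : ortho V p -> ortho V q -> ortho V (hsub p q).
Proof. intros Op Oq v Vv. specialize (Op v Vv). specialize (Oq v Vv). hinner_expand. lra. Qed.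

(* The discriminant of [t |-> |x - (u + t v)|^2 - d >= 0]. *)
Lemma near_min_cauchy_schwarz (V : H -> Prop) x u v d :
  closed_subspace V -> (forall w, V w -> d <= hinner (hsub x w) (hsub x w)) ->
  V u -> V v ->
  hinner (hsub x u) v * hinner (hsub x u) v
  <= (hinner (hsub x u) (hsub x u) - d) * hinner v v.
Proof.
  intros hV Hd Vu Vv. apply discriminant_le; [apply hinner_pos|]. intros t.
  assert (Vut : V (hadd u (hscal t v))) by (destruct hV as (_ & Vadd & Vscal & _); auto).
  specialize (Hd _ Vut).
  replace (hsub x (hadd u (hscal t v))) with (hadd (hsub x u) (hscal (- t) v)) in Hd
    by hvec_eq.
  rewrite hinner_add_scal_sq in Hd. lra.
Qed.

Section ProjectionExistence.
Variables (V : H -> Prop) (x : H).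
Hypothesis hV : closed_subspace V.

Lemma minimizing_sequence : exists (d : R) (u : nat -> H),
  (forall v, V v -> d <= hinner (hsub x v) (hsub x v)) /\
  (forall n, V (u n) /\ hinner (hsub x (u n)) (hsub x (u n)) < d + / (INR n + 1)).
Proof.
  destruct (glb_exists (fun r => exists v, V v /\ r = hinner (hsub x v) (hsub x v)))
    as [d [Hlow Hglb]].
  - exists (hinner (hsub x hzero) (hsub x hzero)), hzero. split; [apply hV | reflexivity].
  - exists 0. intros r (v & _ & ->). apply hinner_pos.
  - destruct (choice (fun n v => V v /\ hinner (hsub x v) (hsub x v) < d + / (INR n + 1)))
      as [u Hu].
    + intros n.
      assert (Hn : 0 < / (INR n + 1)) by (apply Rinv_0_lt_compat; pose proof (pos_INR n); lra).
      destruct (glb_approx _ _ _ (conj Hlow Hglb) Hn) as [r [(v & Vv & ->) Hr]].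
      eauto.
    + exists d, u. split; [|exact Hu]. intros v Vv. apply Hlow. eauto.
Qed.

Variables (d : R) (u : nat -> H).
Hypothesis Hd : forall v, V v -> d <= hinner (hsub x v) (hsub x v).
Hypothesis Hu :
  forall n, V (u n) /\ hinner (hsub x (u n)) (hsub x (u n)) < d + / (INR n + 1).

Lemma minimizing_sequence_cauchy_sq m n :
  hinner (hsub (u m) (u n)) (hsub (u m) (u n)) <= 2 * / (INR m + 1) + 2 * / (INR n + 1).
Proof.
  set (a := hsub x (u n)). set (b := hsub x (u m)).
  destruct (Hu m) as [Vm Hm]. destruct (Hu n) as [Vn Hn]. fold a b in Hm, Hn.
  assert (Vmid : V (hscal (1 / 2) (hadd (u m) (u n))))
    by (destruct hV as (_ & Vadd & Vscal & _); auto).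
  pose proof (Hd _ Vmid) as Hmid.
  replace (hsub x (hscal (1 / 2) (hadd (u m) (u n)))) with (hscal (1 / 2) (hadd a b)) in Hmid
    by (unfold a, b; hvec_eq).
  replace (hsub (u m) (u n)) with (hsub a b) by (unfold a, b; hvec_eq).
  pose proof (parallelogram a b). rewrite !hinner_scal, hinner_scal_r in Hmid. lra.
Qed.

Lemma minimizing_sequence_converges : exists p, V p /\ hconverges H u p.
Proof.
  destruct (hcomplete H u) as [p Hp].
  - intros eps Heps.
    destruct (inv_INR_succ_small (eps * eps / 4)) as [N HN]; [nra|].
    exists N. intros m n Hm Hn. apply hnorm_lt_of_sq; [exact Heps|].
    pose proof (minimizing_sequence_cauchy_sq m n).
    pose proof (HN m Hm). pose proof (HN n Hn). unfold hsub in *. lra.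
  - exists p. split; [|exact Hp].
    destruct hV as (_ & _ & _ & Vlim). apply (Vlim u p); [apply Hu | exact Hp].
Qed.

Lemma minimizing_sequence_limit_ortho p : hconverges H u p -> ortho V (hsub x p).
Proof.
  intros Hp v Vv.
  set (e := hinner (hsub x p) v). set (c := hinner v v).
  assert (Hc : 0 <= c) by apply hinner_pos.
  enough (e * e <= 0) by nra.
  apply Rle_plus_epsilon. intros eps Heps. rewrite Rplus_0_l.
  set (delta := eps / (4 * c + 1)).
  assert (Hdelta : delta * (4 * c + 1) = eps) by (unfold delta; field; lra).
  assert (delta_pos : 0 < delta) by (apply Rdiv_lt_0_compat; lra).
  destruct (inv_INR_succ_small delta delta_pos) as [N1 HN1].
  destruct (hconverges_sq u p delta Hp delta_pos) as [N2 HN2].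
  set (n := Nat.max N1 N2).
  specialize (HN1 n (Nat.le_max_l _ _)). specialize (HN2 n (Nat.le_max_r _ _)).
  destruct (Hu n) as [Vn Hn].
  set (A := hinner (hsub x (u n)) v). set (B := hinner (hsub (u n) p) v).
  assert (Esplit : e = A + B) by (unfold e, A, B; hinner_expand; ring).
  assert (HA : A * A <= delta * c).
  { eapply Rle_trans; [exact (near_min_cauchy_schwarz V x (u n) v d hV Hd Vn Vv)|].
    apply Rmult_le_compat_r; [exact Hc | lra]. }
  assert (HB : B * B <= delta * c).
  { eapply Rle_trans; [exact (cauchy_schwarz (hsub (u n) p) v)|].
    apply Rmult_le_compat_r; [exact Hc | lra]. }
  rewrite Esplit. nra.
Qed.

End ProjectionExistence.

Lemma proj_exists (V : H -> Prop) x :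
  closed_subspace V -> exists p, V p /\ ortho V (hsub x p).
Proof.
  intros hV.
  destruct (minimizing_sequence V x hV) as (d & u & Hd & Hu).
  destruct (minimizing_sequence_converges V x hV d u Hd Hu) as (p & Vp & Hp).
  exists p. split; [exact Vp|].
  exact (minimizing_sequence_limit_ortho V x hV d u Hd Hu p Hp).
Qed.

Lemma proj_spec (V : H -> Prop) x :
  closed_subspace V -> V (proj V x) /\ ortho V (hsub x (proj V x)).
Proof. intros hV. unfold proj. apply epsilon_spec, proj_exists, hV. Qed.

Lemma proj_eq (V : H -> Prop) x p :
  (forall p q, V p -> V q -> V (hsub p q)) ->
  V p -> ortho V (hsub x p) -> proj V x = p.
Proof.
  intros Vsub Vp Op.
  assert (Hq : V (proj V x) /\ ortho V (hsub x (proj V x)))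
    by (unfold proj; apply epsilon_spec; eauto).
  destruct Hq as [Vq Oq]. set (q := proj V x) in *.
  apply hsub_eq0, hinner_def.
  replace (hinner (hsub q p) (hsub q p))
    with (hinner (hsub x p) (hsub q p) - hinner (hsub x q) (hsub q p))
    by (hinner_expand; ring).
  rewrite Op, Oq by auto. ring.
Qed.

Lemma proj_ortho_compl (S : H -> Prop) x :
  closed_subspace S -> proj (ortho S) x = hsub x (proj S x).
Proof.
  intros hS. destruct (proj_spec S x hS) as [SP OP].
  apply proj_eq; [intros; apply ortho_sub; auto | exact OP |].
  intros v Ov. replace (hsub x (hsub x (proj S x))) with (proj S x) by hvec_eq.
  rewrite hinner_sym. apply Ov, SP.
Qed.

Lemma proj_sub (W : H -> Prop) a b :
  closed_subspace W -> proj W (hsub a b) = hsub (proj W a) (proj W b).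
Proof.
  intros hW. destruct (proj_spec W a hW) as [Wa Oa]. destruct (proj_spec W b hW) as [Wb Ob].
  apply proj_eq; [intros; apply subspace_sub; auto | apply subspace_sub; auto |].
  replace (hsub (hsub a b) (hsub (proj W a) (proj W b)))
    with (hsub (hsub a (proj W a)) (hsub b (proj W b))) by hvec_eq.
  apply ortho_sub; assumption.
Qed.

Lemma proj_compl_hinner_proj (V : H -> Prop) x :
  closed_subspace V -> hinner (hsub x (proj V x)) (proj V x) = 0.
Proof. intros hV. destruct (proj_spec V x hV) as [VP OP]. apply OP, VP. Qed.

Lemma proj_pythagoras (V : H -> Prop) x : closed_subspace V ->
  hinner x x = hinner (hsub x (proj V x)) (hsub x (proj V x)) + hinner (proj V x) (proj V x).
Proof.
  intros hV. pose proof (proj_compl_hinner_proj V x hV) as E.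
  hinner_expand. hinner_expand_in E. rewrite (hinner_sym H (proj V x) x). lra.
Qed.

Lemma hnorm_proj_le (V : H -> Prop) x : closed_subspace V -> hnorm (proj V x) <= hnorm x.
Proof.
  intros hV. apply sqrt_le_1_alt. rewrite (proj_pythagoras V x hV).
  pose proof (hinner_pos H (hsub x (proj V x))). lra.
Qed.

Lemma hnorm_proj_ortho_le (V : H -> Prop) x :
  closed_subspace V -> hnorm (proj (ortho V) x) <= hnorm x.
Proof.
  intros hV. rewrite proj_ortho_compl by exact hV. apply sqrt_le_1_alt.
  rewrite (proj_pythagoras V x hV). pose proof (hinner_pos H (proj V x)). lra.
Qed.

Lemma hinner_proj_l (V : H -> Prop) x :
  closed_subspace V -> hinner (proj V x) x = hinner (proj V x) (proj V x).
Proof.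
  intros hV. pose proof (proj_compl_hinner_proj V x hV) as E.
  rewrite hinner_sym in E. hinner_expand_in E. lra.
Qed.

Lemma hinner_proj_compl_l (V : H -> Prop) x : closed_subspace V ->
  hinner (hsub x (proj V x)) x = hinner (hsub x (proj V x)) (hsub x (proj V x)).
Proof.
  intros hV. pose proof (proj_compl_hinner_proj V x hV) as E.
  hinner_expand. hinner_expand_in E. lra.
Qed.

Lemma oblique_proj_id (V1 V2 : H -> Prop) x :
  closed_subspace V1 -> V2 hzero -> direct_sum_full V1 V2 -> V1 x ->
  oblique_proj V1 V2 x = x.
Proof.
  intros hV1 V2_0 [_ Hdisj] V1x.
  assert (Hxx : hsub x x = hzero) by hvec_eq.
  assert (Hq : V1 (oblique_proj V1 V2 x) /\ V2 (hsub x (oblique_proj V1 V2 x))).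
  { unfold oblique_proj. apply epsilon_spec. exists x. rewrite Hxx. auto. }
  destruct Hq as [V1q V2q].
  symmetry. apply hsub_eq0, Hdisj; [apply subspace_sub |]; assumption.
Qed.

End HilbertGeometry.

Section Angles.
Context {H : Hilbert}.
Implicit Types (x y : H) (V : H -> Prop).

Lemma hnorm_ratio_mul (f : H -> H) x : x <> hzero -> hnorm (f x) / hnorm x * hnorm x = hnorm (f x).
Proof. intros Hx. pose proof (hnorm_gt0 x Hx). field. lra. Qed.

Definition norm_ratios V (f : H -> H) (r : R) : Prop :=
  exists x, V x /\ x <> hzero /\ r = hnorm (f x) / hnorm x.

Lemma norm_ratios_ge0 V f r : norm_ratios V f r -> 0 <= r.
Proof.
  intros (x & _ & Hx & ->). unfold Rdiv.
  apply Rmult_le_pos; [apply hnorm_ge0 | left; apply Rinv_0_lt_compat, hnorm_gt0, Hx].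
Qed.

Lemma norm_ratios_le1 V f r :
  (forall x, hnorm (f x) <= hnorm x) -> norm_ratios V f r -> r <= 1.
Proof.
  intros Hf (x & _ & Hx & ->).
  apply (Rmult_le_reg_r (hnorm x)); [apply hnorm_gt0, Hx|].
  rewrite hnorm_ratio_mul, Rmult_1_l by exact Hx. apply Hf.
Qed.

Lemma norm_ratios_inhabited V f : nonzero_sub V -> exists r, norm_ratios V f r.
Proof. intros (x & Vx & Hx). eexists. exists x. eauto. Qed.

Lemma cos_ang_glb V1 V2 : nonzero_sub V1 -> is_glb (norm_ratios V1 (proj V2)) (cos_ang V1 V2).
Proof.
  intros nV1. unfold cos_ang. apply epsilon_spec, glb_exists.
  - apply norm_ratios_inhabited, nV1.
  - exists 0. apply norm_ratios_ge0.
Qed.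

Lemma cos_ang_ge0 V1 V2 : nonzero_sub V1 -> 0 <= cos_ang V1 V2.
Proof. intros nV1. apply (cos_ang_glb V1 V2 nV1), norm_ratios_ge0. Qed.

Lemma cos_ang_le1 V1 V2 : closed_subspace V2 -> nonzero_sub V1 -> cos_ang V1 V2 <= 1.
Proof.
  intros hV2 nV1. destruct (norm_ratios_inhabited V1 (proj V2) nV1) as [r Hr].
  apply Rle_trans with r; [apply (cos_ang_glb V1 V2 nV1), Hr|].
  apply (norm_ratios_le1 V1 (proj V2)); [intros; apply hnorm_proj_le, hV2 | exact Hr].
Qed.

Lemma cos_ang_mul_le V1 V2 x :
  nonzero_sub V1 -> V1 x -> cos_ang V1 V2 * hnorm x <= hnorm (proj V2 x).
Proof.
  intros nV1 V1x. destruct (classic (x = hzero)) as [->|Hx].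
  - rewrite hnorm_0, Rmult_0_r. apply hnorm_ge0.
  - rewrite <- (hnorm_ratio_mul (proj V2) x Hx).
    apply Rmult_le_compat_r; [apply hnorm_ge0|].
    apply (cos_ang_glb V1 V2 nV1). exists x. auto.
Qed.

Lemma sin_ang_lub V1 V2 :
  closed_subspace V2 -> nonzero_sub V1 ->
  is_lub (norm_ratios V1 (proj (ortho V2))) (sin_ang V1 V2).
Proof.
  intros hV2 nV1. unfold sin_ang. apply epsilon_spec.
  destruct (completeness (norm_ratios V1 (proj (ortho V2)))) as [s Hs].
  - exists 1. intros r. apply norm_ratios_le1. intros; apply hnorm_proj_ortho_le, hV2.
  - apply norm_ratios_inhabited, nV1.
  - exists s. exact Hs.
Qed.

Lemma sin_ang_ge0 V1 V2 : closed_subspace V2 -> nonzero_sub V1 -> 0 <= sin_ang V1 V2.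
Proof.
  intros hV2 nV1. destruct (norm_ratios_inhabited V1 (proj (ortho V2)) nV1) as [r Hr].
  apply Rle_trans with r; [apply (norm_ratios_ge0 _ _ _ Hr)|].
  apply (sin_ang_lub V1 V2 hV2 nV1), Hr.
Qed.

Lemma hnorm_proj_ortho_le_sin V1 V2 x :
  closed_subspace V2 -> nonzero_sub V1 -> V1 x ->
  hnorm (proj (ortho V2) x) <= sin_ang V1 V2 * hnorm x.
Proof.
  intros hV2 nV1 V1x. destruct (classic (x = hzero)) as [->|Hx].
  - pose proof (hnorm_proj_ortho_le V2 hzero hV2). rewrite hnorm_0 in *. lra.
  - rewrite <- (hnorm_ratio_mul (proj (ortho V2)) x Hx).
    apply Rmult_le_compat_r; [apply hnorm_ge0|].
    apply (sin_ang_lub V1 V2 hV2 nV1). exists x. auto.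
Qed.

Lemma sq_hnorm_le_proj_ortho (S : H -> Prop) u y :
  closed_subspace S -> ortho S y -> hinner u y = hinner u u ->
  hnorm u * hnorm u <= hnorm (proj (ortho S) u) * hnorm y.
Proof.
  intros hS Oy Huy. rewrite hnorm_sq, <- Huy, proj_ortho_compl by exact hS.
  replace (hinner u y) with (hinner (hsub u (proj S u)) y); [apply cauchy_schwarz_hnorm|].
  pose proof (Oy _ (proj1 (proj_spec S u hS))) as E.
  rewrite hinner_sym in E. hinner_expand. lra.
Qed.

Lemma hnorm_proj_le_sin (S W : H -> Prop) y :
  closed_subspace S -> closed_subspace W -> nonzero_sub W -> ortho S y ->
  hnorm (proj W y) <= sin_ang W S * hnorm y.
Proof.
  intros hS hW nW Oy. set (w := proj W y).
  pose proof (sq_hnorm_le_proj_ortho S w y hS Oy (hinner_proj_l W y hW)) as Hw.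
  pose proof (hnorm_proj_ortho_le_sin W S w hS nW (proj1 (proj_spec W y hW))) as Hsin.
  pose proof (sin_ang_ge0 W S hS nW). pose proof (hnorm_ge0 y).
  assert (Hww : hnorm w * hnorm w <= (sin_ang W S * hnorm y) * hnorm w).
  { eapply Rle_trans; [exact Hw|]. apply (Rmult_le_compat_r (hnorm y)) in Hsin; [lra|assumption]. }
  destruct (hnorm_ge0 w) as [Hpos|Hzero]; [|rewrite <- Hzero; nra].
  apply Rmult_le_reg_r with (hnorm w); assumption.
Qed.

Lemma cos_le_hnorm_proj (S W : H -> Prop) y :
  closed_subspace S -> closed_subspace W -> nonzero_sub (ortho W) -> ortho S y ->
  cos_ang (ortho W) S * hnorm y <= hnorm (proj W y).
Proof.
  intros hS hW nWp Oy.
  set (w := proj W y). set (z := hsub y w).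
  pose proof (sq_hnorm_le_proj_ortho S z y hS Oy (hinner_proj_compl_l W y hW)) as Hz.
  pose proof (cos_ang_mul_le (ortho W) S z nWp (proj2 (proj_spec W y hW))) as Hcos.
  set (c := cos_ang (ortho W) S) in *.
  assert (Hc : 0 <= c <= 1) by (split; [apply cos_ang_ge0 | apply cos_ang_le1]; assumption).
  assert (Pz : hnorm z * hnorm z
               = hnorm (proj (ortho S) z) * hnorm (proj (ortho S) z)
                 + hnorm (proj S z) * hnorm (proj S z)).
  { rewrite !hnorm_sq, proj_ortho_compl by exact hS. apply proj_pythagoras, hS. }
  assert (Py : hnorm y * hnorm y = hnorm z * hnorm z + hnorm w * hnorm w).
  { rewrite !hnorm_sq. apply proj_pythagoras, hW. }
  pose proof (hnorm_ge0 y). pose proof (hnorm_ge0 w). pose proof (hnorm_ge0 z).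
  set (Z := hnorm z) in *. set (Q := hnorm (proj (ortho S) z)) in *.
  set (P := hnorm (proj S z)) in *.
  assert (HP : (c * Z) * (c * Z) <= P * P)
    by (apply Rmult_le_compat; try apply Rmult_le_pos; lra).
  assert (HQ : Q * Q <= (1 - c * c) * (Z * Z)) by lra.
  assert (HZ : Z * Z <= (1 - c * c) * (hnorm y * hnorm y)).
  { destruct (Req_dec Z 0) as [HZ0|HZ0].
    { rewrite HZ0, Rmult_0_l. apply Rmult_le_pos; nra. }
    apply Rmult_le_reg_r with (Z * Z); [nra|].
    assert (Z * Z * (Z * Z) <= (Q * Q) * (hnorm y * hnorm y)).
    { replace (Q * Q * (hnorm y * hnorm y)) with ((Q * hnorm y) * (Q * hnorm y)) by ring.
      apply Rmult_le_compat; nra. }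
    assert (Q * Q * (hnorm y * hnorm y) <= (1 - c * c) * (Z * Z) * (hnorm y * hnorm y))
      by (apply Rmult_le_compat_r; nra).
    nra. }
  nra.
Qed.

End Angles.

Lemma R_lam_eq_proj_ortho {H : Hilbert} (S W A : H -> Prop) lam x :
  closed_subspace S -> closed_subspace W -> closed_subspace A ->
  direct_sum_full A (ortho S) -> A x ->
  R_lam S W A lam x = hscal (1 - lam) (proj W (proj (ortho S) x)).
Proof.
  intros hS hW hA hAS Ax.
  assert (Sp0 : ortho S hzero) by (intros v _; apply hinner_0_l).
  unfold R_lam.
  rewrite (oblique_proj_id A (ortho S) x hA Sp0 hAS Ax), proj_ortho_compl, proj_sub
    by assumption.
  hvec_eq.
Qed.

Theorem mainTheorem10 (H : Hilbert) (S W A : H -> Prop)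
  (hS : closed_subspace S) (hW : closed_subspace W) (hA : closed_subspace A)
  (nS : nonzero_sub S) (nW : nonzero_sub W) (nA : nonzero_sub A)
  (nSp : nonzero_sub (ortho S)) (nWp : nonzero_sub (ortho W))
  (nAp : nonzero_sub (ortho A))
  (hAS : direct_sum_full A (ortho S))
  (lam : R) (hlam : 0 <= lam <= 1) :
  forall x : H, A x ->
    hnorm (R_lam S W A lam x) = (1 - lam) * hnorm (proj W (proj (ortho S) x)) /\
    (1 - lam) * cos_ang A (ortho S) * cos_ang (ortho W) S * hnorm x
      <= hnorm (R_lam S W A lam x) /\
    hnorm (R_lam S W A lam x)
      <= (1 - lam) * sin_ang A S * sin_ang W S * hnorm x.
Proof.
  intros x Ax.
  set (y := proj (ortho S) x).
  assert (Oy : ortho S y)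
    by (unfold y; rewrite proj_ortho_compl by exact hS; apply (proj_spec S x hS)).
  rewrite (R_lam_eq_proj_ortho S W A lam x hS hW hA hAS Ax), hnorm_scal,
    Rabs_pos_eq by lra.
  fold y. set (w := proj W y).
  pose proof (cos_ang_mul_le A (ortho S) x nA Ax) as Hy_low.
  pose proof (cos_le_hnorm_proj S W y hS hW nWp Oy) as Hw_low.
  pose proof (hnorm_proj_ortho_le_sin A S x hS nA Ax) as Hy_up.
  pose proof (hnorm_proj_le_sin S W y hS hW nW Oy) as Hw_up.
  fold y w in Hy_low, Hw_low, Hy_up, Hw_up.
  pose proof (cos_ang_ge0 (ortho W) S nWp). pose proof (sin_ang_ge0 W S hS nW).
  split; [reflexivity | split].
  - replace ((1 - lam) * cos_ang A (ortho S) * cos_ang (ortho W) S * hnorm x)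
      with ((1 - lam) * (cos_ang (ortho W) S * (cos_ang A (ortho S) * hnorm x))) by ring.
    apply Rmult_le_compat_l; [lra|].
    eapply Rle_trans; [apply Rmult_le_compat_l; eassumption | exact Hw_low].
  - replace ((1 - lam) * sin_ang A S * sin_ang W S * hnorm x)
      with ((1 - lam) * (sin_ang W S * (sin_ang A S * hnorm x))) by ring.
    apply Rmult_le_compat_l; [lra|].
    eapply Rle_trans; [exact Hw_up | apply Rmult_le_compat_l; eassumption].
Qed.
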